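(* Let $(\mathcal{N},\|\cdot\|)$ be a real normed space with Borel $\sigma$-algebra $\mathcal{B}$ such that the addition is measurable from $(\mathcal{N}^2,\mathcal{B}\otimes\mathcal{B})$ to $(\mathcal{N},\mathcal{B})$, and let $\kappa$ be the density of $\mathcal{N}$. Then there is no probability measure on $(\kappa,\mathfrak{P}(\kappa))$ such that every singleton has measure zero.
   Context: The density of $\mathcal{N}$ is the smallest cardinal $\kappa$ such that $\mathcal{N}$ has a dense subset of cardinality $\kappa$; $\kappa$ is regarded as a set (von Neumann cardinal), and $\mathfrak{P}(E)$ denotes the power set of $E$. *)

From HB Require Import structures.
From mathcomp Require Import all_boot all_order all_algebra.
From mathcomp Require Import all_classical all_reals all_analysis.
Set Implicit Arguments. Unset Strict Implicit. Unset Printing Implicit Defensive.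
Import Order.TTheory GRing.Theory Num.Theory.
Import numFieldNormedType.Exports.
Local Open Scope classical_set_scope.
Local Open Scope ring_scope.

Definition borel_sets (T : topologicalType) : set (set T) :=
  <<s [set: T], open >>.

Definition borel_prod_sets (T : topologicalType) : set (set (T * T)) :=
  <<s [set: T * T],
      [set Q | exists A B, borel_sets A /\ borel_sets B /\ Q = A `*` B] >>.

Definition add_measurable (R : realType) (N : normedModType R) : Prop :=
  forall C : set N, borel_sets C ->
    borel_prod_sets ((fun p : N * N => p.1 + p.2) @^-1` C).

(* D is a dense subset of minimal cardinality, i.e. its cardinality is the
   density of the space. *)
Definition min_card_dense (T : topologicalType) (D : set T) : Prop :=
  dense D /\ forall D' : set T, dense D' -> (D #<= D')%card.

(* A probability measure on (D, P(D)), D seen as a subset of T: a function on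
   all subsets of D, nonnegative, total mass 1, countably additive. *)
Definition powerset_probability (R : realType) (T : Type) (D : set T)
    (mu : set T -> R) : Prop :=
  [/\ forall A, A `<=` D -> 0 <= mu A,
      mu D = 1 &
      forall F : nat -> set T,
        (forall n, F n `<=` D) -> trivIset setT F ->
        (fun n => \sum_(0 <= k < n) mu (F k)) @ \oo --> mu (\bigcup_n F n)].

From HB Require Import structures.
From mathcomp Require Import all_boot all_order all_algebra.
From mathcomp Require Import all_classical all_reals all_analysis.
From mathcomp Require Import wochoice lra.
Set Implicit Arguments. Unset Strict Implicit. Unset Printing Implicit Defensive.
Import Order.TTheory GRing.Theory Num.Theory.
Import numFieldNormedType.Exports.
Local Open Scope classical_set_scope.
Local Open Scope ring_scope.

(* Since D has minimal cardinality among dense sets, it injects into the dense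
   set U = \bigcup_n M_n, where M_n is a maximal 1/(n+1)-separated set; pushing
   mu forward gives a probability P on all subsets of N that vanishes on points
   and is carried by U.  So it suffices to show P S = 0 for every bounded
   e-separated S.  Otherwise well-order N and shrink S to a set of positive
   measure whose proper initial segments are all null.  For r large, the sums
   x + r y with x, y in S are e/2-apart unless (x, y) coincide, so measurability
   of addition puts every subset of S * S, in particular the graph of the strict
   well-order, in the product sigma-algebra.  Fubini on that graph compares null
   vertical sections with horizontal sections of full measure and yields
   (P S)^2 = 0. *)

Definition discrete_sigma (T : pointedType) :=
  g_sigma_algebraType (@setT (set T)).

Lemma discrete_sigma_measurable (T : pointedType) (A : set (discrete_sigma T)) :
  measurable A.
Proof. exact: sub_sigma_algebra. Qed.

Section null_xsections.
Local Open Scope ereal_scope.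
Context d (T : measurableType d) (R : realType).
Variable P : {sigma_finite_measure set T -> \bar R}.

Lemma null_xsections_measure0 (E : set (T * T)) (S : set T) :
  measurable S -> measurable E ->
  (forall x, P (xsection E x) = 0) ->
  (forall y, S y -> P S <= P (ysection E y)) -> P S = 0.
Proof.
move=> mS mE xE0 yE_ge.
have := indic_fubini_tonelli P P mE.
rewrite indic_fubini_tonelli_FE // indic_fubini_tonelli_GE //.
have -> : P \o xsection E = cst 0 by apply/funext => x; exact: xE0.
rewrite integral0 => /esym int0.
have mPy := measurable_fun_ysection P mE.
have : P S * P S <= 0.
  rewrite -[leRHS]int0 -integral_cst //.
  apply: (@le_trans _ _ (\int[P]_(y in S) (P \o ysection E) y)).
    by apply: ge0_le_integral => //; exact: measurable_funS mPy.
  exact: ge0_subset_integral.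
rewrite le_eqVlt ltNge mule_ge0 // orbF mule_eq0 orbb => /eqP //.
Qed.

End null_xsections.

Section null_initial_segments.
Local Open Scope ereal_scope.
Context (R : realType) (T : pointedType).
Local Notation X := (discrete_sigma T).
Variable P : {sigma_finite_measure set X -> \bar R}.

Lemma measure0_of_null_initial_segments (S : set X) (lt : X -> X -> Prop) :
  (forall x y, S x -> S y -> [\/ lt x y, x = y | lt y x]) ->
  (forall x, P [set x] = 0) ->
  (forall x, S x -> P [set y | S y /\ lt y x] = 0) ->
  measurable ([set p | S p.1 /\ S p.2 /\ lt p.2 p.1] : set (X * X)) ->
  P S = 0.
Proof.
set E := [set p | _] => lt_total P1 Pseg mE.
have mX (A : set X) : measurable A by exact: discrete_sigma_measurable.
apply: (null_xsections_measure0 (mX S) mE) => [x|y Sy].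
- have [Sx|nSx] := pselect (S x).
    apply: (subset_measure0 (mX _) (mX _) _ (Pseg x Sx)).
    by move=> y; rewrite /xsection /= inE => -[_ []].
  rewrite (_ : xsection _ x = set0) ?measure0 //.
  by apply/seteqP; split => // y; rewrite /xsection /= inE => -[].
- have S_sub : S `<=` ysection E y `|` ([set y] `|` [set z | S z /\ lt z y]).
    move=> x Sx; rewrite /ysection /= inE.
    by case: (lt_total x y Sx Sy) => [?|->|?]; [right; right|right; left|left].
  have <- : P (ysection E y `|` ([set y] `|` [set z | S z /\ lt z y])) =
            P (ysection E y).
    apply: measureU0 (mX _) (mX _) _.
    exact: null_set_setU (mX _) (mX _) (P1 y) (Pseg y Sy).
  by apply: le_measure; rewrite ?inE.
Qed.

Lemma exists_null_initial_segments (S : set X) (Rw : rel X) :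
  well_order Rw -> 0 < P S ->
  exists2 S', S' `<=` S &
    0 < P S' /\ forall t, S' t -> P [set y | S' y /\ Rw y t /\ y <> t] = 0.
Proof.
move=> Rwo PS.
have Rwc : wo_chain Rw predT by move=> A _; exact: Rwo.
have Rw_anti := wo_chain_antisymmetric Rwc.
have Ple A B : A `<=` B -> P A <= P B.
  by move=> AB; apply: le_measure; rewrite ?inE //;
    exact: discrete_sigma_measurable.
pose seg s := [set t | S t /\ Rw t s /\ t <> s].
(* Either S itself works, or so does seg z for the least z with P (seg z) > 0. *)
have [[s [Ss Pseg_s]]|] := pselect (exists s, S s /\ 0 < P (seg s)); last first.
  move=> /forallNP Pseg0; exists S => //; split => // t St.
  apply/eqP; rewrite eq_le measure_ge0 andbT leNgt; apply/negP => Pt.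
  exact: (Pseg0 t).
have [|z [[/asboolP[Sz Pz] z_min] _]] :=
    Rwo [pred s | `[< S s /\ 0 < P (seg s) >]].
  by exists s; apply/asboolP.
exists (seg z); first by move=> t [].
split => // t [St [Rtz tz]].
apply/eqP; rewrite eq_le measure_ge0 andbT.
apply: (le_trans (Ple _ (seg t) _)); first by move=> y [[Sy _] yt].
rewrite leNgt; apply/negP => Pt.
have Rzt : Rw z t by apply: z_min; apply/asboolP.
by apply: tz; apply: Rw_anti => //; rewrite Rtz Rzt.
Qed.

End null_initial_segments.

Section separated.
Variables (R : realType) (N : normedModType R).

Definition separated (e : R) (A : set N) :=
  forall x y, A x -> A y -> x <> y -> e <= `|x - y|.

Lemma exists_separated_net (e : R) : 0 < e ->
  exists2 A, separated e A & forall x, exists2 a, A a & `|x - a| < e.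
Proof.
move=> e0.
have [A [sepA Amax]] :
    exists A, separated e A /\ forall B, A `<` B -> ~ separated e B.
  apply: Zorn_bigcup => F Fsep Ftot x y [X FX Xx] [Y FY Yy] xy.
  have [XY|YX] := Ftot X Y FX FY.
  - exact: (Fsep Y FY x y (XY x Xx) Yy xy).
  - exact: (Fsep X FX x y Xx (YX y Yy) xy).
exists A => // x; apply: contrapT => /forall2NP x_far.
have far a : A a -> e <= `|x - a|.
  by move=> Aa; have [//|/negP] := x_far a; rewrite -leNgt.
have nAx : ~ A x by move=> /far; rewrite subrr normr0 leNgt e0.
apply: (Amax (x |` A)).
  split; first by move=> y Ay; right.
  by move=> /(_ x (or_introl erefl)).
move=> y z [->|Ay] [->|Az] yz //.
- exact: far.
- by rewrite distrC; exact: far.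
- exact: sepA.
Qed.

Lemma dense_bigcup_nets (M : nat -> set N) :
  (forall n x, exists2 a, M n a & `|x - a| < n.+1%:R^-1) ->
  dense (\bigcup_n M n).
Proof.
move=> Mnet O [z Oz] oO.
have /nbhs_ballP[d /= d0 dO] : nbhs z O by apply: open_nbhs_nbhs.
have [n _ /(_ n (leqnn _)) nd] := near_infty_natSinv_lt (PosNum d0).
have [a Ma za] := Mnet n z.
exists a; split; last by exists n.
by apply: dO; rewrite -ball_normE /=; exact: lt_trans za nd.
Qed.

Lemma separated_lincomb_inj (e k : R) (S : set N) : 0 < e -> separated e S ->
  (forall x, S x -> `|x| <= k) ->
  forall x y s t, S x -> S y -> S s -> S t ->
  `|(s + ((2 * k + e) / e) *: t) - (x + ((2 * k + e) / e) *: y)| < e / 2 ->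
  x = s /\ y = t.
Proof.
move=> e0 sepS bS x y s t Sx Sy Ss St.
have k0 : 0 <= k by exact: le_trans (normr_ge0 x) (bS x Sx).
set r := (2 * k + e) / e.
(* r * e = 2 * k + e exceeds the diameter 2 * k of S, so t <> y is not
   compensated by s - x. *)
have r0 : 0 <= r by rewrite /r divr_ge0 // ?ltW //; lra.
have re : r * e = 2 * k + e by rewrite /r divfK // gt_eqF.
have -> : s + r *: t - (x + r *: y) = (s - x) + r *: (t - y).
  by rewrite scalerBr opprD addrACA.
have [<-|yt] := pselect (y = t).
  rewrite subrr scaler0 addr0 => sx_small; split => //; apply: contrapT => xs.
  by have := sepS x s Sx Ss xs; rewrite distrC; lra.
move=> close; exfalso.
have ty_far : e <= `|t - y| by rewrite distrC; exact: sepS.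
have rty : `|r *: (t - y)| = r * `|t - y| by rewrite normrZ ger0_norm.
have rty_far : r * e <= r * `|t - y| by rewrite ler_wpM2l.
have tri : `|r *: (t - y)| <= `|(s - x) + r *: (t - y)| + `|s - x|.
  by have := ler_normB ((s - x) + r *: (t - y)) (s - x); rewrite addrC addKr.
have sx_le : `|s - x| <= `|s| + `|x| by exact: ler_normB.
by have := bS s Ss; have := bS x Sx; lra.
Qed.

End separated.

Lemma borel_prod_preimage_measurable (T : topologicalType) (U V : pointedType)
    (f : U -> T) (g : V -> T) (Q : set (T * T)) :
  borel_prod_sets Q ->
  measurable ((fun p => (f p.1, g p.2)) @^-1` Q
              : set (discrete_sigma U * discrete_sigma V)).
Proof.
move: Q; apply: smallest_sub.
  split.
  - by rewrite preimage_set0; exact: measurable0.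
  - by move=> A mA; rewrite setTD -preimage_setC; exact: measurableC.
  - by move=> A mA; rewrite preimage_bigcup; exact: bigcupT_measurable.
move=> _ [A [B [_ [_ ->]]]].
rewrite (_ : _ @^-1` _ = f @^-1` A `*` g @^-1` B); last first.
  by apply/seteqP; split => -[].
exact: measurableX (discrete_sigma_measurable _) (discrete_sigma_measurable _).
Qed.

Lemma separated_bounded_subsets_measurable (R : realType) (N : normedModType R)
    (e k : R) (S : set N) (Q : set (N * N)) :
  add_measurable N -> 0 < e -> separated e S -> (forall x, S x -> `|x| <= k) ->
  Q `<=` S `*` S -> measurable (Q : set (discrete_sigma N * discrete_sigma N)).
Proof.
move=> addm e0 sepS bS QS.
set r := (2 * k + e) / e.
pose W := \bigcup_(q in Q) ball (q.1 + r *: q.2) (e / 2).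
have borelW : borel_sets W.
  by apply: sub_sigma_algebra; apply: bigcup_open => q _; exact: ball_open.
have mW := borel_prod_preimage_measurable id ( *:%R r) (addm W borelW).
suff -> : Q = S `*` S `&`
    (fun p => (p.1, r *: p.2)) @^-1` ((fun p => p.1 + p.2) @^-1` W).
  apply: measurableI mW.
  by apply: measurableX; exact: discrete_sigma_measurable.
apply/seteqP; split => [[x y] Qxy|[x y] [[Sx Sy] [[s t] Qst /=]]].
  split; first exact: QS.
  by exists (x, y) => //; rewrite -ball_normE /= subrr normr0 divr_gt0.
have [Ss St] := QS _ Qst; rewrite -ball_normE /= => close.
by case: (separated_lincomb_inj e0 sepS bS Sx Sy Ss St close) => /= -> ->.
Qed.

Section separated_null.
Local Open Scope ereal_scope.
Variables (R : realType) (N : normedModType R).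
Hypothesis addm : add_measurable N.
Variable P : probability (discrete_sigma N) R.
Hypothesis P1 : forall x, P [set x] = 0.

Lemma separated_bounded_measure0 (e k : R) (S : set N) :
  (0 < e)%R -> separated e S -> (forall x, S x -> (`|x| <= k)%R) -> P S = 0.
Proof.
move=> e0 sepS bS; apply/eqP; rewrite eq_le measure_ge0 andbT leNgt.
apply/negP => PS.
have [Rw Rwo] := well_ordering_principle N.
have [S' S'S [PS' S'seg]] := exists_null_initial_segments Rwo PS.
have Rw_total : {in predT &, total Rw} by apply: wo_chainW => A _; exact: Rwo.
suff PS'0 : P S' = 0.
  by move: PS'; rewrite lt_neqAle => /andP[/eqP PS'n _]; exact/PS'n/esym.
pose lt y x := Rw y x /\ y <> x.
apply: (measure0_of_null_initial_segments (lt := lt)) => //.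
- move=> x y _ _; have [->|xy] := pselect (x = y); first by constructor 2.
  case/orP: (Rw_total x y isT isT) => ?; [constructor 1|constructor 3] => //.
  by split=> // /esym.
- apply: (separated_bounded_subsets_measurable addm e0 sepS bS).
  by move=> [x y] [S'x [S'y _]]; split; exact: S'S.
Qed.

Let bigcup_measure0 (F : nat -> set N) :
  (forall n, P (F n) = 0) -> P (\bigcup_n F n) = 0.
Proof.
move=> F0; apply/(negligibleP _ (discrete_sigma_measurable _)).
apply: negligible_bigcup => n.
by exists (F n); split; [exact: discrete_sigma_measurable|exact: F0|].
Qed.

Lemma bigcup_separated_measure0 (M : nat -> set N) (e : nat -> R) :
  (forall n, 0 < e n)%R -> (forall n, separated (e n) (M n)) ->
  P (\bigcup_n M n) = 0.
Proof.
move=> e0 sepM; apply: bigcup_measure0 => n.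
rewrite (_ : M n = \bigcup_k (M n `&` [set x | `|x| <= k%:R]%R)); last first.
  apply/seteqP; split => [x Mx|x [k _ []] //].
  by exists (Num.bound `|x|) => //; split; rewrite //= ltW // archi_boundP.
apply: bigcup_measure0 => k.
apply: (separated_bounded_measure0 (k := k%:R) (e0 n)) => [x y [Mx _] [My _]|].
  exact: sepM.
by move=> x [].
Qed.

End separated_null.

Section image_probability.
Variables (R : realType) (T : Type) (U : pointedType).
Variables (D : set T) (mu : set T -> R) (f : T -> U).
Hypothesis muP : powerset_probability D mu.

Lemma powerset_probability_set0 : mu set0 = 0.
Proof.
(* Additivity on the constant family set0 makes mu set0 *+ n converge to
   mu set0. *)
case: muP => mu_ge0 _ mu_add.
have tr0 : trivIset setT (fun _ : nat => @set0 T) by move=> ? ? _ _ [x []].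
have := mu_add (fun=> set0) (fun=> sub0set _) tr0.
rewrite bigcup0 //; under eq_fun do rewrite sumr_const_nat subn0.
move=> cvg_mu0.
have nd : nondecreasing_seq (fun n => mu set0 *+ n).
  by move=> m n mn; apply: ler_wpMn2l => //; exact: mu_ge0.
have := nondecreasing_cvgn_le nd (cvgP _ cvg_mu0) 2.
rewrite (cvg_lim _ cvg_mu0) // mulr2n gerDr => mu0_le0.
by apply/eqP; rewrite eq_le mu0_le0 mu_ge0.
Qed.

Definition image_probability (A : set (discrete_sigma U)) : \bar R :=
  (mu (D `&` f @^-1` A))%:E.

Let image_probability0 : image_probability set0 = 0%E.
Proof.
by rewrite /image_probability preimage_set0 setI0 powerset_probability_set0.
Qed.

Let image_probability_ge0 A : (0 <= image_probability A)%E.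
Proof. by case: muP => mu_ge0 _ _; rewrite lee_fin mu_ge0 // => x []. Qed.

Let image_probability_sigma_additive : semi_sigma_additive image_probability.
Proof.
case: muP => _ _ mu_add F _ tF _; rewrite /image_probability.
under eq_fun do rewrite sumEFin.
apply: cvg_EFin; first exact: nearW.
rewrite preimage_bigcup setI_bigcupr.
apply: mu_add => [n x []//|i j _ _ [x [[_ Fi] [_ Fj]]]].
by apply: (tF i j I I); exists (f x).
Qed.

HB.instance Definition _ := isMeasure.Build _ (discrete_sigma U) R
  image_probability image_probability0 image_probability_ge0
  image_probability_sigma_additive.

Lemma image_probability_eq1 (A : set U) :
  f @` D `<=` A -> image_probability A = 1%E.
Proof.
case: muP => _ muD _ DA; rewrite /image_probability setIidl ?muD //.
by move=> x Dx; apply: DA; exists x.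
Qed.

Let image_probability_setT : image_probability setT = 1%E.
Proof. exact: image_probability_eq1. Qed.

HB.instance Definition _ := Measure_isProbability.Build _ (discrete_sigma U) R
  image_probability image_probability_setT.

(* The probability structure on image_probability depends on muP. *)
Definition image_prob : probability (discrete_sigma U) R := image_probability.

Lemma image_probability_set1 : set_inj D f ->
  (forall x, D x -> mu [set x] = 0) ->
  forall u, image_probability [set u] = 0%E.
Proof.
move=> finj mu1 u; rewrite /image_probability.
have [[x Dx fx]|nfu] := pselect (exists2 x, D x & f x = u).
  rewrite (_ : _ `&` _ = [set x]) ?mu1 //.
  apply/seteqP; split => [z [Dz /= fz]|z /= ->//].
  by apply: finj; rewrite ?inE //= fz fx.
rewrite (_ : _ `&` _ = set0) ?powerset_probability_set0 //.
by apply/seteqP; split => // z [Dz /= fz]; apply: nfu; exists z.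
Qed.

End image_probability.

Unset Implicit Arguments.

Theorem lemma4p10 (R : realType) (N : normedModType R) :
  add_measurable N ->
  forall D : set N, min_card_dense D ->
  ~ exists mu : set N -> R,
      powerset_probability D mu /\ (forall x, D x -> mu [set x] = 0).
Proof.
move=> addm D [_ Dmin] [mu [muP mu1]].
pose e n : R := n.+1%:R^-1.
have e0 n : 0 < e n by rewrite invr_gt0 ltr0n.
have /choice[M Mnet] : forall n, exists M,
    separated (e n) M /\ forall x : N, exists2 a, M a & `|x - a| < e n.
  by move=> n; have [M] := exists_separated_net N (e0 n); exists M.
have /pcard_leP/injfunPex[f fM finj] :=
  Dmin _ (dense_bigcup_nets (fun n => (Mnet n).2)).
have PU0 : image_prob f muP (\bigcup_n M n) = 0%E :=
  bigcup_separated_measure0 addm (image_probability_set1 muP finj mu1) e0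
    (fun n => (Mnet n).1).
have PU1 : image_prob f muP (\bigcup_n M n) = 1%E.
  by apply: (image_probability_eq1 muP) => _ [x Dx <-]; exact: fM.
by move: PU1; rewrite PU0 => /eqP; rewrite eq_sym onee_eq0.
Qed.
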